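(* Let $\mathcal{C}$ be a category and $A$ an object of $\mathcal{C}$ with $D(A)=k$ finite. Then every sequence $\cdots\leqslant^d X_i\leqslant^d\cdots\leqslant^d X_1\leqslant^d A$ of objects of $\mathcal{C}$ contains at most $k$ pairwise non-isomorphic objects.
   Context: In a category $\mathcal{C}$, $X\leqslant^d Y$ means there are morphisms $f:X\to Y$, $g:Y\to X$ with $g\circ f=\mathrm{id}_X$; $X<^p Y$ means $X\leqslant^d Y$ and $X\not\cong Y$. A chain of length $k$ for $A$ is $X_k<^p\cdots<^p X_1\leqslant^d A$; the depth $D(A)$ is the supremum of the lengths of all chains for $A$. *)

From Stdlib Require Import Arith.

Record Category := {
  Ob :> Type;
  Hom : Ob -> Ob -> Type;
  comp : forall {a b c : Ob}, Hom b c -> Hom a b -> Hom a c;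
  id : forall a : Ob, Hom a a;
  comp_assoc : forall (a b c d : Ob) (h : Hom c d) (g : Hom b c) (f : Hom a b),
      comp h (comp g f) = comp (comp h g) f;
  comp_id_l : forall (a b : Ob) (f : Hom a b), comp (id b) f = f;
  comp_id_r : forall (a b : Ob) (f : Hom a b), comp f (id a) = f
}.

Arguments Hom {_} _ _.
Arguments comp {_ a b c} _ _.
Arguments id {_} _.

Definition iso {C : Category} (X Y : C) : Prop :=
  exists (f : Hom X Y) (g : Hom Y X), comp g f = id X /\ comp f g = id Y.

(* X ≤^d Y : X is a retract (direct summand) of Y *)
Definition retract_le {C : Category} (X Y : C) : Prop :=
  exists (f : Hom X Y) (g : Hom Y X), comp g f = id X.

Definition proper_retract {C : Category} (X Y : C) : Prop :=
  retract_le X Y /\ ~ iso X Y.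

(* A chain of length k for A:  X_k <^p ... <^p X_1 ≤^d A.
   We index X_1, ..., X_k as X 0, ..., X (k-1).  The chain of length 0 is
   the empty chain. *)
Definition is_chain {C : Category} (A : C) (k : nat) (X : nat -> C) : Prop :=
  (0 < k -> retract_le (X 0) A) /\
  (forall i, S i < k -> proper_retract (X (S i)) (X i)).

Definition has_chain {C : Category} (A : C) (k : nat) : Prop :=
  exists X : nat -> C, is_chain A k X.

(* D(A) = k (finite): k is the supremum of lengths of chains for A,
   i.e. the maximum, since lengths are natural numbers. *)
Definition depth_eq {C : Category} (A : C) (k : nat) : Prop :=
  has_chain A k /\ (forall m, has_chain A m -> m <= k).

(* Each X_(i+1) is a retract of X_i, so X_j is a retract of X_i whenever i <= j,
   and every X_j is a retract of A.  Hence n pairwise non-isomorphic members of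
   the sequence, listed by increasing index, form a chain of length n for A, and
   n <= D(A) = k.  The chain is built by induction on n, appending the member of
   largest index to a chain made of the others. *)
From Stdlib Require Import Arith Lia.

Lemma retract_le_refl {C : Category} (X : C) : retract_le X X.
Proof. exists (id X), (id X). apply comp_id_l. Qed.

Lemma retract_le_trans {C : Category} (X Y Z : C) :
  retract_le X Y -> retract_le Y Z -> retract_le X Z.
Proof.
  intros [f1 [g1 H1]] [f2 [g2 H2]].
  exists (comp f2 f1), (comp g1 g2).
  rewrite <- comp_assoc, (comp_assoc _ _ _ _ _ g2 f2 f1), H2, comp_id_l.
  exact H1.
Qed.

Lemma is_chain_snoc {C : Category} (A : C) (n : nat) (Y : nat -> C) (Z : C) :
  is_chain A n Y ->
  (n = 0 -> retract_le Z A) ->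
  (forall i, S i = n -> proper_retract Z (Y i)) ->
  is_chain A (S n) (fun m => if m =? n then Z else Y m).
Proof.
  intros [HY0 HYs] HZ0 HZs. split.
  - intros _. destruct n as [|n]; [now apply HZ0 | apply HY0; lia].
  - intros i Hi. destruct (Nat.eqb_spec (S i) n) as [Hn | Hn];
      destruct (Nat.eqb_spec i n); try lia.
    + now apply HZs.
    + apply HYs; lia.
Qed.

Lemma exists_argmax_le (f : nat -> nat) (n : nat) :
  exists p, p <= n /\ forall i, i <= n -> f i <= f p.
Proof.
  induction n as [|n [p [Hp Hmax]]].
  - exists 0. split; [lia|]. intros i Hi. now replace i with 0 by lia.
  - destruct (Nat.le_gt_cases (f (S n)) (f p)).
    + exists p. split; [lia|]. intros i Hi.
      destruct (Nat.eq_dec i (S n)) as [->|]; [lia | apply Hmax; lia].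
    + exists (S n). split; [lia|]. intros i Hi.
      destruct (Nat.eq_dec i (S n)) as [->|]; [lia|].
      specialize (Hmax i ltac:(lia)). lia.
Qed.

Definition skip (p i : nat) : nat := if i <? p then i else S i.

Lemma skip_neq (p i : nat) : skip p i <> p.
Proof. unfold skip. destruct (Nat.ltb_spec i p); lia. Qed.

Lemma skip_le (p n i : nat) : p <= n -> i < n -> skip p i <= n.
Proof. unfold skip. destruct (Nat.ltb_spec i p); lia. Qed.

Lemma skip_inj (p i j : nat) : i <> j -> skip p i <> skip p j.
Proof. unfold skip. destruct (Nat.ltb_spec i p), (Nat.ltb_spec j p); lia. Qed.

Section DecreasingRetracts.

Variables (C : Category) (A : C) (X : nat -> C).
Hypothesis retract_X0_A : retract_le (X 0) A.
Hypothesis retract_XS_X : forall i, retract_le (X (S i)) (X i).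

Lemma retract_le_antitone (i j : nat) : i <= j -> retract_le (X j) (X i).
Proof.
  induction 1 as [|j _ IH]; [apply retract_le_refl|].
  exact (retract_le_trans _ _ _ (retract_XS_X j) IH).
Qed.

Lemma retract_le_bounded (j : nat) : retract_le (X j) A.
Proof.
  apply (retract_le_trans _ (X 0)); [apply retract_le_antitone; lia | exact retract_X0_A].
Qed.

Definition pairwise_noniso (n : nat) (idx : nat -> nat) : Prop :=
  forall i j, i < n -> j < n -> i <> j -> ~ iso (X (idx i)) (X (idx j)).

Lemma pairwise_noniso_skip (n p : nat) (idx : nat -> nat) :
  p <= n -> pairwise_noniso (S n) idx -> pairwise_noniso n (fun i => idx (skip p i)).
Proof.
  intros Hp Hidx i j Hi Hj Hij.
  pose proof (skip_le p n i Hp Hi). pose proof (skip_le p n j Hp Hj).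
  apply Hidx; [lia | lia | now apply skip_inj].
Qed.

Lemma chain_of_pairwise_noniso (n : nat) (idx : nat -> nat) :
  pairwise_noniso n idx ->
  exists Y, is_chain A n Y /\ forall m, m < n -> exists i, i < n /\ Y m = X (idx i).
Proof.
  revert idx. induction n as [|n IH]; intros idx Hidx.
  - exists X. split; [split; intros; lia | intros; lia].
  - destruct (exists_argmax_le idx n) as [p [Hp Hmax]].
    destruct (IH (fun i => idx (skip p i))) as [Y [HY HYX]];
      [now apply pairwise_noniso_skip|].
    exists (fun m => if m =? n then X (idx p) else Y m). split.
    + apply is_chain_snoc; [exact HY | intros _; apply retract_le_bounded|].
      intros i Hi. destruct (HYX i) as [q [Hq ->]]; [lia|].
      pose proof (skip_le p n q Hp Hq). split.
      * apply retract_le_antitone, Hmax; lia.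
      * apply Hidx; [lia | lia | apply not_eq_sym, skip_neq].
    + intros m Hm. destruct (Nat.eqb_spec m n) as [_ | Hmn].
      * exists p. split; [lia | reflexivity].
      * destruct (HYX m) as [q [Hq ->]]; [lia|].
        exists (skip p q). split; [pose proof (skip_le p n q Hp Hq); lia | reflexivity].
Qed.

End DecreasingRetracts.

Theorem proposition2p11 (C : Category) (A : C) (k : nat) (Hk : depth_eq A k)
    (X : nat -> C)
    (HX0 : retract_le (X 0) A)
    (HXs : forall i, retract_le (X (S i)) (X i)) :
  forall (n : nat) (idx : nat -> nat),
    (forall i j, i < n -> j < n -> i <> j -> ~ iso (X (idx i)) (X (idx j))) ->
    n <= k.
Proof.
  intros n idx Hidx.
  destruct (chain_of_pairwise_noniso C A X HX0 HXs n idx Hidx) as [Y [HY _]].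
  apply (proj2 Hk). now exists Y.
Qed.
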